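(* Suppose $(X,\tau)$ is a Choquet space, $B\subseteq\mathcal{P}(X)$ is a base for $\tau$ closed under finite intersections, and $B_{0}\subseteq B$. Then there exists $B_{1}$ with $B_{0}\subseteq B_{1}\subseteq B$, $|B_{1}|\leq|B_{0}|+\aleph_{0}$, such that $(X,\tau_{B_{1}})$ is Choquet, where $\tau_{B_{1}}$ is the topology generated by $B_{1}$.
   Context: The Choquet game on a space $X$: in round $n$ player A chooses a non-empty open $U_{n}\subseteq V_{n-1}$ (with $V_{-1}=X$) and player B chooses a non-empty open $V_{n}\subseteq U_{n}$; B wins if $\bigcap_{n}V_{n}\neq\emptyset$. $X$ is a Choquet space if B has a winning strategy. *)

From mathcomp Require Import all_boot.
From mathcomp Require Import boolp classical_sets cardinality.
Set Implicit Arguments. Unset Strict Implicit. Unset Printing Implicit Defensive.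
Local Open Scope classical_set_scope.

Definition is_topology {X : Type} (T : set (set X)) : Prop :=
  [/\ T setT,
      (forall U V, T U -> T V -> T (U `&` V)) &
      (forall F : set (set X), F `<=` T -> T (\bigcup_(A in F) A))].

Definition is_base {X : Type} (tau B : set (set X)) : Prop :=
  B `<=` tau /\
  (forall U, tau U -> exists F : set (set X), F `<=` B /\ U = \bigcup_(A in F) A).

(* closed under (binary, hence all nonempty finite) intersections *)
Definition closed_under_finite_inter {X : Type} (B : set (set X)) : Prop :=
  forall U V, B U -> B V -> B (U `&` V).

Definition generated_topology {X : Type} (B1 : set (set X)) : set (set X) :=
  [set U | forall T, is_topology T -> B1 `<=` T -> T U].

(* A strategy for player B maps the sequence
   [:: U_0; ...; U_n] of player A's moves so far to B's answer V_n
   (B's own earlier moves are determined by the strategy). *)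
Definition legal_B_strategy {X : Type} (tau : set (set X))
    (sigma : seq (set X) -> set X) : Prop :=
  forall (h : seq (set X)) (U : set X), tau U -> U !=set0 ->
    [/\ tau (sigma (rcons h U)), sigma (rcons h U) !=set0 &
        sigma (rcons h U) `<=` U].

Definition B_answer {X : Type} (sigma : seq (set X) -> set X)
    (U : nat -> set X) (n : nat) : set X :=
  sigma (mkseq U n.+1).

Definition winning_B_strategy {X : Type} (tau : set (set X))
    (sigma : seq (set X) -> set X) : Prop :=
  legal_B_strategy tau sigma /\
  forall U : nat -> set X,
    (forall n, tau (U n) /\ U n !=set0) ->
    (forall n, U n.+1 `<=` B_answer sigma U n) ->
    (\bigcap_n B_answer sigma U n) !=set0.

Definition choquet {X : Type} (tau : set (set X)) : Prop :=
  exists sigma, winning_B_strategy tau sigma.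

From mathcomp Require Import all_boot.
From mathcomp Require Import boolp classical_sets functions cardinality.
Local Open Scope classical_set_scope.
Set Implicit Arguments. Unset Strict Implicit. Unset Printing Implicit Defensive.

(* The family B1 is the hull of B0 under finite intersections and under one
   operation for each finite sequence s of its members (or X): adjoin a nonempty
   member of B inside sigma(s), where sigma is a winning strategy of B for tau.
   In the game for the topology generated by B1, player B shrinks each move U_n
   of A to a member W_n of B1 or X with W_n inside U_n, and answers with the set
   adjoined inside sigma(W_0, ..., W_n).  The W_n then form a legal play against
   sigma, so the intersection of B's answers is nonempty.

   The hull is reached in omega steps, each of which ranges over finite
   sequences of sets already obtained, so its size is at most |B0| + aleph_0
   once k * k = k is known for infinite k.  This (Hessenberg's theorem) is
   proved by Zorn's lemma on pairings D * D -> D of subsets D of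
   K = B0 + nat: a maximal pairing could be extended to D and a disjoint copy
   of D unless K \ D injects into D, and then K injects into D. *)

Lemma choice_on (T U : Type) (u0 : U) (A : set T) (R : T -> U -> Prop) :
  (forall x, A x -> exists y, R x y) -> exists f : T -> U, forall x, A x -> R x (f x).
Proof.
move=> AR; have /choice[f fR] : forall x, exists y, A x -> R x y.
  by move=> x; have [/AR[y]|] := pselect (A x); [exists y | exists u0].
by exists f.
Qed.

Definition injects {T U} (A : set T) (B : set U) :=
  exists2 f : T -> U, set_fun A B f & set_inj A f.

Lemma injects_card_le T U (A : set T) (B : set U) : injects A B -> (A #<= B)%card.
Proof. by move=> /injfunPex[f]; exact: inj_card_le. Qed.

Section Injections.
Variables T U V : Type.
Implicit Types (A : set T) (B : set U) (C : set V).

Lemma injects_trans A B C : injects A B -> injects B C -> injects A C.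
Proof.
move=> [f fAB finj] [g gBC ginj]; exists (g \o f) => [x /fAB/gBC //|x y xA yA /=].
move=> /(ginj _ _ (mem_set (fAB _ (set_mem xA))) (mem_set (fAB _ (set_mem yA)))).
exact: finj.
Qed.

Lemma injects_subl A A' B : A `<=` A' -> injects A' B -> injects A B.
Proof.
move=> AA' [f fAB finj]; exists f => [x /AA'/fAB //|x y xA yA].
by apply: finj; apply: mem_set; apply: AA'; exact: set_mem.
Qed.

Lemma injects_subr A B B' : B `<=` B' -> injects A B -> injects A B'.
Proof. by move=> BB' [f fAB finj]; exists f => // x /fAB/BB'. Qed.

Lemma injects_image (t0 : T) A (f : T -> U) : injects (f @` A) A.
Proof.
have [g gP] := choice_on t0 (fun y (Ay : (f @` A) y) =>
  let: ex_intro2 x Ax fx := Ay in ex_intro _ x (conj Ax fx)).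
exists g => [y /gP[] //|y z /set_mem/gP[_ gy] /set_mem/gP[_ gz] gyz].
by rewrite -gy -gz gyz.
Qed.

Definition glue (A : set T) (f g : T -> U) : T -> U :=
  fun x => if pselect (A x) then f x else g x.

Lemma glue_fun A A' B B' (f g : T -> U) :
  set_fun A B f -> set_fun A' B' g -> set_fun (A `|` A') (B `|` B') (glue A f g).
Proof.
move=> fAB gAB x AA'x; rewrite /glue; case: pselect => Ax; first by left; exact: fAB.
by right; apply: gAB; case: AA'x.
Qed.

Lemma glue_inj A A' B B' (f g : T -> U) :
  set_fun A B f -> set_fun A' B' g -> set_inj A f -> set_inj A' g ->
  B `&` B' = set0 -> set_inj (A `|` A') (glue A f g).
Proof.
move=> fAB gAB finj ginj BB' x y /set_mem xA /set_mem yA.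
have fg u v : A u -> A' v -> f u <> g v.
  move=> Au A'v fuv; suff : (B `&` B') (f u) by rewrite BB'.
  by split; [exact: fAB|rewrite fuv; exact: gAB].
rewrite /glue; case: pselect => Ax; case: pselect => Ay.
- by apply: finj; apply: mem_set.
- by case: yA => // A'y /(fg _ _ Ax A'y).
- by case: xA => // A'x /esym /(fg _ _ Ay A'x).
- by case: xA => // A'x; case: yA => // A'y; apply: ginj; apply: mem_set.
Qed.

Lemma injects_setU2 A A' B B' :
  B `&` B' = set0 -> injects A B -> injects A' B' -> injects (A `|` A') (B `|` B').
Proof.
move=> BB' [f fAB finj] [g gAB ginj]; exists (glue A f g).
  exact: glue_fun.
exact: glue_inj fAB gAB finj ginj BB'.
Qed.

End Injections.

Lemma injects_setX T1 T2 U1 U2 (A1 : set T1) (A2 : set T2) (B1 : set U1)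
    (B2 : set U2) :
  injects A1 B1 -> injects A2 B2 -> injects (A1 `*` A2) (B1 `*` B2).
Proof.
move=> [f fA finj] [g gA ginj].
exists (fun p => (f p.1, g p.2)) => [p [/fA ? /gA ?] //|[x y] [x' y']].
move=> /set_mem[/= xA yA] /set_mem[/= x'A y'A] [fx gy].
by rewrite (finj _ _ (mem_set xA) (mem_set x'A) fx) (ginj _ _ (mem_set yA) (mem_set y'A) gy).
Qed.

Lemma injects_of_matching T U (u0 : U) (A : set T) (B : set U) (G : set (T * U)) :
  G `<=` A `*` B -> (forall p q, G p -> G q -> p.2 = q.2 -> p.1 = q.1) ->
  (forall x, A x -> exists y, G (x, y)) -> injects A B.
Proof.
move=> GAB Ginj /(choice_on u0)[f fG].
exists f => [x /fG/GAB[] //|x y /set_mem/fG Gx /set_mem/fG Gy].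
exact: Ginj Gx Gy.
Qed.

Lemma injects_total T U (t0 : T) (u0 : U) (A : set T) (B : set U) :
  injects A B \/ injects B A.
Proof.
pose matching (G : set (T * U)) :=
  G `<=` A `*` B /\ forall p q, G p -> G q -> p.1 = q.1 <-> p.2 = q.2.
have [G [[GAB Gbij] Gmax]] : exists G, matching G /\ forall G', G `<` G' -> ~ matching G'.
  apply: Zorn_bigcup => F FM Ftot; split=> [p [G /FM[+ _] Gp]|p q [G1 F1 G1p] [G2 F2 G2q]].
    exact.
  have [/(_ _ G1p) G2p|/(_ _ G2q) G1q] := Ftot _ _ F1 F2.
    exact: (FM G2 F2).2.
  exact: (FM G1 F1).2.
have [AG|/existsNP[a /not_implyP[Aa /forallNP aG]]] :=
  pselect (forall x, A x -> exists y, G (x, y)).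
  by left; apply: (injects_of_matching u0 GAB _ AG) => p q Gp Gq /(Gbij _ _ Gp Gq).
have [BG|/existsNP[b /not_implyP[Bb /forallNP bG]]] :=
  pselect (forall y, B y -> exists x, G (x, y)).
  right; apply: (@injects_of_matching _ _ t0 _ _ [set p | G (p.2, p.1)]) => //.
    by move=> [y x] /GAB[].
  by move=> p q Gp Gq /(Gbij _ _ Gp Gq).
exfalso; apply: (Gmax (G `|` [set (a, b)])).
  split=> [p|]; first by left.
  by move=> /(_ (a, b) (or_intror erefl)) /aG.
have Gab x y : G (x, y) -> x <> a /\ y <> b.
  by move=> Gxy; split=> [xa|yb]; [apply: (aG y); rewrite -xa|apply: (bG x); rewrite -yb].
split=> [p [/GAB //|->]|p q]; first by split.
case=> [Gp|->]; case=> [Gq|->].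
- exact: Gbij.
- by case: p Gp => x y /Gab[xa yb]; split=> /= E; exfalso; [apply: xa|apply: yb]; rewrite E.
- by case: q Gq => x y /Gab[xa yb]; split=> /= E; exfalso; [apply: xa|apply: yb]; rewrite E.
- by [].
Qed.

Definition pairing T (D : set T) (f : T * T -> T) :=
  set_fun (D `*` D) D f /\ set_inj (D `*` D) f.

Section Pairing.
Variables (T : Type) (D : set T) (f : T * T -> T) (a b : T).
Hypotheses (pf : pairing D f) (Da : D a) (Db : D b) (ab : a <> b).

Lemma injects_setU_pairing C : injects C D -> injects (D `|` C) D.
Proof.
move=> [h hD hinj]; apply: (injects_trans (B := D `*` D)); last by exists f; case: pf.
apply: (injects_subr (B := D `*` [set a] `|` D `*` [set b])).
  by move=> [x y] [[/= ? ->]|[/= ? ->]]; split.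
apply: injects_setU2.
- by rewrite -subset0 => p [[_ pa] [_ pb]]; apply: ab; rewrite -pa -pb.
- by exists (fun x => (x, a)) => // x y _ _ [].
- exists (fun x => (h x, b)) => [x /hD //|x y xC yC [/hinj]]; exact.
Qed.

Lemma pairing_extend C : injects D C -> injects C D -> D `&` C = set0 ->
  exists f', pairing (D `|` C) f' /\ forall p, (D `*` D) p -> f' p = f p.
Proof.
move=> [g gC ginj] CD DC; have [fD finj] := pf.
have [k kC kinj] : injects ((D `|` C) `*` (D `|` C)) C.
  have DCD := injects_setU_pairing CD.
  apply: injects_trans (injects_setX DCD DCD) _.
  by apply: injects_trans (ex_intro2 _ _ f fD finj) (ex_intro2 _ _ g gC ginj).
exists (glue (D `*` D) f k); split; last by move=> p Dp; rewrite /glue; case: pselect.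
have DDE : D `*` D `|` (D `|` C) `*` (D `|` C) = (D `|` C) `*` (D `|` C).
  by apply/setUidPr => p [? ?]; split; left.
by split; rewrite -DDE; [exact: glue_fun|exact: glue_inj fD kC finj kinj DC].
Qed.

End Pairing.

Definition graph_of T (D : set T) (f : T * T -> T) : set ((T * T) * T) :=
  [set w | (D `*` D) w.1 /\ w.2 = f w.1].

Section Hessenberg.
Variables (T : Type) (K : set T) (e : nat -> T).
Hypotheses (eK : range e `<=` K) (e_inj : injective e).

Definition pairing_graph (G : set ((T * T) * T)) :=
  exists D f, [/\ range e `<=` D, D `<=` K, pairing D f & G = graph_of D f].

Lemma pairing_range : exists f, pairing (range e) f.
Proof.
suff [f fD finj] : injects (range e `*` range e) (range e) by exists f.
apply: injects_trans (injects_setX (injects_image 0 setT e) (injects_image 0 setT e)) _.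
exists (fun p => e (pickle p)) => [p _|p q _ _ /e_inj/(pcan_inj pickleK)//].
by exists (pickle p).
Qed.

Lemma pairing_graph_common U : U !=set0 ->
  (forall w w', U w -> U w' -> exists G, [/\ pairing_graph G, G `<=` U, G w & G w']) ->
  pairing_graph U.
Proof.
move=> [w0 Uw0] common; pose D := [set x | exists z, U ((x, x), z)].
have domD D' f' : graph_of D' f' `<=` U -> D' `<=` D.
  by move=> GU x D'x; exists (f' (x, x)); apply: GU.
have inD w : U w -> (D `*` D) w.1.
  move=> Uw; have [G [[D' [f' [_ _ _ ->]]] GU [[D'w1 D'w2] _] _]] := common w w Uw Uw.
  by split; apply: (domD _ _ GU).
have funU w w' : U w -> U w' -> w.1 = w'.1 -> w.2 = w'.2.
  move=> Uw Uw' E; have [G [[D' [f' [_ _ _ ->]]] _ [_ ->] [_ ->]]] := common w w' Uw Uw'.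
  by rewrite E.
have totU p : (D `*` D) p -> exists z, U (p, z).
  case: p => x y [[zx Ux] [zy Uy]].
  have [G [[D' [f' [_ _ _ ->]]] GU [[Dx _] _] [[Dy _] _]]] := common _ _ Ux Uy.
  by exists (f' (x, y)); apply: GU.
have [f fU] := choice_on (e 0) totU.
exists D, f; split.
- move=> _ [n _ <-]; have [G [[D' [f' [eD' _ _ ->]]] GU _ _]] := common w0 w0 Uw0 Uw0.
  by apply: (domD _ _ GU); apply: eD'; exists n.
- move=> x [z Uxz]; have [G [[D' [f' [_ D'K _ ->]]] _ [[Dx _] _] _]] := common _ _ Uxz Uxz.
  exact: D'K.
- split=> [p Dp|p q /set_mem Dp /set_mem Dq fpq].
    have [G [[D' [f' [_ _ [f'D _] ->]]] GU [D'p /= ->] _]] := common _ _ (fU p Dp) (fU p Dp).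
    exact: (domD _ _ GU) (f'D _ D'p).
  have [G [[D' [f' [_ _ [_ f'inj] ->]]] _ [D'p /= fp] [D'q /= fq]]] :=
    common _ _ (fU p Dp) (fU q Dq).
  by apply: f'inj; [exact: mem_set|exact: mem_set|rewrite -fp -fq].
- apply/seteqP; split=> [w Uw|[p z] [/= Dp ->]]; last exact: fU.
  by split; [exact: inD|exact: funU Uw (fU _ (inD _ Uw)) _].
Qed.

(* The empty graph is admitted only to bound the empty chain. *)
Lemma pairing_graph_chain (F : set (set ((T * T) * T))) :
  F `<=` [set G | pairing_graph G \/ G = set0] -> total_on F subset ->
  pairing_graph (\bigcup_(G in F) G) \/ \bigcup_(G in F) G = set0.
Proof.
move=> FA Ftot; have [[w0 Uw0]|U0] := pselect (\bigcup_(G in F) G !=set0); last first.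
  by right; apply/seteqP; split=> // w Uw; apply: U0; exists w.
left; apply: pairing_graph_common => [|w w' [G1 F1 G1w] [G2 F2 G2w']]; first by exists w0.
have adm G v : F G -> G v -> pairing_graph G.
  by move=> FG Gv; case: (FA G FG) => // G0; rewrite G0 in Gv.
have [G12|G21] := Ftot _ _ F1 F2.
- by exists G2; split; [exact: adm F2 G2w'|exact: bigcup_sup|exact: G12|].
- by exists G1; split; [exact: adm F1 G1w|exact: bigcup_sup| |exact: G21].
Qed.

Theorem injects_square : injects (K `*` K) K.
Proof.
have [G [AG Gmax]] := Zorn_bigcup pairing_graph_chain.
have [D [f [eD DK pf GE]]] : pairing_graph G.
  case: AG => // G0; have [f0 pf0] := pairing_range; exfalso.
  apply: (Gmax (graph_of (range e) f0)); last by left; exists (range e), f0; split.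
  rewrite G0; split=> // /(_ ((e 0, e 0), f0 (e 0, e 0))); apply.
  by split=> //; split; exists 0.
subst G; have Dn n : D (e n) by apply: eD; exists n.
have e01 : e 0 <> e 1 by move/e_inj.
have [KD|[g gK ginj]] := injects_total (e 0) (e 0) (K `\` D) D.
  have KD' : injects K D.
    apply: injects_subl (injects_setU_pairing pf (Dn 0) (Dn 1) e01 KD).
    by move=> x Kx; have [|] := pselect (D x); [left|right].
  apply: injects_trans (injects_setX KD' KD') _.
  by apply: injects_subr DK _; exists f; case: pf.
exfalso; set C := g @` D.
have nDC x : C x -> ~ D x by move=> [y /gK[_ nD] <-].
have [f' [pf' f'f]] : exists f', pairing (D `|` C) f' /\ forall p, (D `*` D) p -> f' p = f p.
  apply: (pairing_extend pf (Dn 0) (Dn 1) e01 (C := C)).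
  - by exists g => // x Dx; exists x.
  - exact: injects_image (e 0) D g.
  - by rewrite -subset0 => x [Dx /nDC].
apply: (Gmax (graph_of (D `|` C) f')); last first.
  left; exists (D `|` C), f'; split=> // [x /eD|x [/DK //|[y /gK[]]]]; [by left|by move=> + _ <-].
split=> [[p z] [/= [Dp1 Dp2] ->]|]; first by split; [split; left|rewrite /= f'f].
have Cg : C (g (e 0)) by exists (e 0).
move=> /(_ ((g (e 0), g (e 0)), f' (g (e 0), g (e 0)))) [].
  by split=> //; split; right.
by move=> [/= Dg _] _; exact: nDC Cg Dg.
Qed.

End Hessenberg.

Definition seqs_in {T : eqType} (Y : set T) : set (seq T) := [set s | [set` s] `<=` Y].

Lemma seqs_in_cons (T : eqType) (Y : set T) x s :
  seqs_in Y (x :: s) <-> Y x /\ seqs_in Y s.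
Proof.
split=> [xsY|[Yx sY] y]; last by rewrite /= in_cons => /orP[/eqP->|/sY].
by split=> [|y ys]; apply: xsY; rewrite /= in_cons ?eqxx ?ys ?orbT.
Qed.

Section SmallSets.
Variables (T : Type) (K : set T) (e : nat -> T).
Hypotheses (eK : range e `<=` K) (e_inj : injective e).

Lemma injects_natX : injects ([set: nat] `*` K) K.
Proof.
apply: injects_trans (injects_square eK e_inj).
apply: injects_setX; last by exists id.
by exists e => [n _|m n _ _ /e_inj //]; apply: eK; exists n.
Qed.

Lemma injects_bigcup U (Y : nat -> set U) :
  (forall n, injects (Y n) K) -> injects (\bigcup_n Y n) K.
Proof.
move=> YK; have /choice[phi phiP] : forall n, exists phi,
    set_fun (Y n) K phi /\ set_inj (Y n) phi.
  by move=> n; have [phi ? ?] := YK n; exists phi.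
have [n nP] := choice_on 0 (fun y (Yy : (\bigcup_n Y n) y) =>
  let: ex_intro2 m _ Ym := Yy in ex_intro _ m Ym).
apply: injects_trans injects_natX.
exists (fun y => (n y, phi (n y) y)) => [y Yy|x y /set_mem Yx /set_mem Yy].
  by split=> //; apply: (phiP _).1; exact: nP.
move: (nP x Yx) (nP y Yy) => Yx' Yy' [nxy]; rewrite nxy in Yx' *.
by apply: (phiP (n y)).2; apply: mem_set.
Qed.

Lemma injects_setU U (A B : set U) : injects A K -> injects B K -> injects (A `|` B) K.
Proof.
move=> AK BK; have -> : A `|` B = \bigcup_n (if n is 0 then A else B).
  by apply/seteqP; split=> [x [Ax|Bx]|x [[|n] _ ?]]; [exists 0|exists 1|left|right].
by apply: injects_bigcup => -[].
Qed.

Lemma injects_set1 U (x : U) : injects [set x] K.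
Proof.
by exists (fun=> e 0) => [_ _|y z /set_mem-> /set_mem->]; first (apply: eK; exists 0).
Qed.

Lemma injects_seqs_in (U : eqType) (Y : set U) : injects Y K -> injects (seqs_in Y) K.
Proof.
move=> [f fK finj]; have [pr prK prinj] := injects_square eK e_inj.
pose code := foldr (fun x c => pr (f x, c)) (e 0).
have codeK s : seqs_in Y s -> K (code s).
  elim: s => [_|x s IH /seqs_in_cons[Yx sY]] /=; first by apply: eK; exists 0.
  by apply: prK; split; [exact: fK|exact: IH].
apply: injects_trans injects_natX.
exists (fun s => (size s, code s)) => [s sY|s t /set_mem sY /set_mem tY].
  by split=> //; exact: codeK.
case; elim: s t sY tY => [|x s IH] [|y t] //= /seqs_in_cons[Yx sY] /seqs_in_cons[Yy tY].
move=> [st] E; have [fxy cst] : (f x, code s) = (f y, code t).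
  by apply: (prinj _ _ _ _ E); apply: mem_set; split; by [apply: fK|apply: codeK].
by rewrite (finj _ _ (mem_set Yx) (mem_set Yy) fxy) (IH t sY tY st cst).
Qed.

End SmallSets.

Lemma seqs_in_bigcup (T : eqType) (F : nat -> set T) s :
  {homo F : m n / (m <= n)%N >-> m `<=` n} ->
  seqs_in (\bigcup_n F n) s -> exists n, seqs_in (F n) s.
Proof.
move=> Fmono; elim: s => [_|x s IH /seqs_in_cons[[m _ Fmx] /IH[n sF]]]; first by exists 0.
exists (maxn m n); apply/seqs_in_cons; split; first exact: Fmono _ _ (leq_maxl m n) _ Fmx.
by move=> y /sF /(Fmono _ _ (leq_maxr m n)).
Qed.

Section Hull.
Variables (X : Type) (B0 : set (set X)) (good : set (seq (set X)))
  (answer : seq (set X) -> set X).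

(* X may occur in the sequences: it is open in the generated topology without
   being a union of members of the hull. *)
Fixpoint hull_stage n : set (set X) :=
  if n is m.+1 then
    hull_stage m `|` [set p.1 `&` p.2 | p in hull_stage m `*` hull_stage m]
      `|` answer @` (seqs_in (hull_stage m `|` [set setT]) `&` good)
  else B0.

Definition hull := \bigcup_n hull_stage n.

Lemma hull_stage_nondecreasing : {homo hull_stage : m n / (m <= n)%N >-> m `<=` n}.
Proof.
move=> m n /subnK <-; elim: (n - m) => [|k IH] //= W /IH Wk.
by left; left.
Qed.

Lemma sub_hull : B0 `<=` hull.
Proof. by move=> W B0W; exists 0. Qed.

Lemma hull_setI : closed_under_finite_inter hull.
Proof.
move=> U V [m _ Um] [n _ Vn]; exists (maxn m n).+1 => //; left; right.
exists (U, V) => //; split.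
  exact: hull_stage_nondecreasing (leq_maxl m n) _ Um.
exact: hull_stage_nondecreasing (leq_maxr m n) _ Vn.
Qed.

Lemma hull_answer s :
  seqs_in (hull `|` [set setT]) s -> good s -> hull (answer s).
Proof.
move=> sC gs; have [n sn] : exists n, seqs_in (hull_stage n `|` [set setT]) s.
  apply: (seqs_in_bigcup (F := fun n => hull_stage n `|` [set setT])).
    by move=> m n mn W [/(hull_stage_nondecreasing mn)|]; [left|right].
  by move=> W /sC[[n _ ?]|->]; [exists n => //; left|exists 0 => //; right].
by exists n.+1 => //; right; exists s.
Qed.

Lemma hull_sub (B : set (set X)) : B0 `<=` B -> closed_under_finite_inter B ->
  answer @` good `<=` B -> hull `<=` B.
Proof.
move=> B0B BI aB W [n _]; elim: n W => [|n IH] W //=; first exact: B0B.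
case=> [[/IH //|[[U V] [/IH BU /IH BV] <-]]|[s [_ gs] <-]].
  exact: BI.
by apply: aB; exists s.
Qed.

Lemma injects_hull T (K : set T) (e : nat -> T) :
  range e `<=` K -> injective e -> injects B0 K -> injects hull K.
Proof.
move=> eK e_inj B0K; apply: (injects_bigcup eK e_inj) => n.
elim: n => [//|n IH] /=.
have KU := injects_setU eK e_inj.
apply: (KU); first apply: (KU _ _ _ IH).
  apply: injects_trans (injects_image (setT, setT) _ _) _.
  exact: (injects_trans (injects_setX IH IH) (injects_square eK e_inj)).
apply: injects_trans (injects_image [::] _ _) _.
apply: injects_subl (@subIsetl _ _ good) _.
exact: (injects_seqs_in eK e_inj (KU _ _ _ IH (injects_set1 eK setT))).
Qed.

End Hull.

Lemma sub_generated_topology X (B1 : set (set X)) : B1 `<=` generated_topology B1.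
Proof. by move=> W B1W T _; apply. Qed.

Lemma generated_topology_nbhs X (B1 : set (set X)) : closed_under_finite_inter B1 ->
  forall U, generated_topology B1 U -> forall x, U x ->
  exists W, [/\ B1 W \/ W = setT, W x & W `<=` U].
Proof.
move=> B1I U tU.
apply: (tU [set U | forall x, U x -> exists W, [/\ B1 W \/ W = setT, W x & W `<=` U]]);
  last by move=> W B1W x Wx; exists W; split=> //; left.
split=> [x _|U1 U2 U1x U2x x [/U1x[W1 [B1W1 W1x W1U]] /U2x[W2 [B1W2 W2x W2U]]]|F Fx x [A FA Ax]].
- by exists setT; split=> //; right.
- exists (W1 `&` W2); split=> //; last by move=> y [/W1U ? /W2U ?].
  case: B1W1 => [B1W1|->]; case: B1W2 => [B1W2|->]; rewrite ?setTI ?setIT; by [left; apply: B1I|left|left|right].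
- by have [W [MW Wx WA]] := Fx A FA x Ax; exists W; split=> // y /WA; exists A.
Qed.

Section PulledBackStrategy.
Variables (X : Type) (tau tau' M : set (set X)) (sigma : seq (set X) -> set X)
  (pick : set X -> set X) (ans : seq (set X) -> set X).
Hypotheses (sigma_win : winning_B_strategy tau sigma) (Mtau : M `<=` tau)
  (pickM : forall U, M (pick U))
  (pick_sub : forall U, tau' U -> U !=set0 -> pick U !=set0 /\ pick U `<=` U)
  (ansP : forall h W, seqs_in M h -> M W -> W !=set0 ->
     [/\ tau' (ans (rcons h W)), ans (rcons h W) !=set0 &
         ans (rcons h W) `<=` sigma (rcons h W)]).

Lemma winning_pulled_back : winning_B_strategy tau' (fun s => ans (map pick s)).
Proof.
have [legal win] := sigma_win.
have pick_seq h : seqs_in M (map pick h) by move=> _ /mapP[U _ ->].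
have mkseq_pick U n : map pick (mkseq U n) = mkseq (pick \o U) n.
  by rewrite /mkseq -map_comp.
split=> [h U tU nU|U UP Uchain].
  have [nW WU] := pick_sub tU nU; rewrite map_rcons.
  have [tV nV Vsigma] := ansP (pick_seq h) (pickM U) nW.
  have [_ _ sigmaW] := legal (map pick h) _ (Mtau (pickM U)) nW.
  by split=> // x /Vsigma /sigmaW /WU.
pose W := pick \o U.
have WP n : W n !=set0 /\ W n `<=` U n by apply: pick_sub; case: (UP n).
have WM n : seqs_in M (mkseq W n) by rewrite -mkseq_pick.
have UW n : B_answer (fun s => ans (map pick s)) U n = ans (rcons (mkseq W n) (W n)).
  by rewrite /B_answer mkseq_pick mkseqS.
have [x xW] : \bigcap_n B_answer sigma W n !=set0.
  apply: win => [n|n y]; first by split; [exact: Mtau (pickM _)|case: (WP n)].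
  have [_ WU] := WP n.+1; move=> /WU /Uchain.
  have [_ _] := ansP (WM n) (pickM (U n)) (WP n).1.
  by rewrite UW /B_answer mkseqS; apply.
exists x => n _; rewrite UW; have [nW WU] := WP n.+1.
have [_ _ sigmaW] := legal (mkseq W n.+1) _ (Mtau (pickM (U n.+1))) nW.
by move: (xW n.+1 I); rewrite /B_answer mkseqS => /sigmaW /WU /Uchain; rewrite UW.
Qed.

End PulledBackStrategy.

Lemma choquet_transfer X (tau tau' M : set (set X)) (sigma : seq (set X) -> set X) :
  winning_B_strategy tau sigma -> M `<=` tau -> M !=set0 ->
  (forall U, tau' U -> U !=set0 -> exists W, [/\ M W, W !=set0 & W `<=` U]) ->
  (forall h W, seqs_in M h -> M W -> W !=set0 ->
     exists V, [/\ tau' V, V !=set0 & V `<=` sigma (rcons h W)]) ->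
  choquet tau'.
Proof.
move=> sigma_win Mtau [W0 MW0] piM ansM.
have /choice[pick pickP] : forall U, exists W,
    M W /\ (tau' U -> U !=set0 -> W !=set0 /\ W `<=` U).
  move=> U; have [[tU nU]|NU] := pselect (tau' U /\ U !=set0).
    by have [W [MW nW WU]] := piM U tU nU; exists W.
  by exists W0; split=> // tU nU; exfalso; apply: NU.
have /choice[ans ansP] : forall s, exists V, forall h W, s = rcons h W ->
    seqs_in M h -> M W -> W !=set0 -> [/\ tau' V, V !=set0 & V `<=` sigma s].
  move=> s; have [[h [W [-> hM MW nW]]]|Ns] :=
    pselect (exists h W, [/\ s = rcons h W, seqs_in M h, M W & W !=set0]).
    by have [V VP] := ansM h W hM MW nW; exists V.
  by exists setT => h W sE hM MW nW; exfalso; apply: Ns; exists h, W.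
exists (fun s => ans (map pick s)); apply: (winning_pulled_back sigma_win Mtau).
- by move=> U; case: (pickP U).
- by move=> U; case: (pickP U) => _; apply.
- by move=> h W; exact: ansP.
Qed.

Lemma legal_answer_base X (tau B : set (set X)) sigma h W :
  legal_B_strategy tau sigma -> is_base tau B -> tau W -> W !=set0 ->
  exists V, [/\ B V, V !=set0 & V `<=` sigma (rcons h W)].
Proof.
move=> legal [_ Bbase] tW nW; have [tsig [y sy] _] := legal h W tW nW.
have [F [FB sE]] := Bbase _ tsig; move: sy; rewrite sE => -[V FV Vy].
by exists V; split; [exact: FB|exists y|exact: bigcup_sup].
Qed.

Theorem lemma2p7 (X : Type) (tau B B0 : set (set X)) :
  is_topology tau -> choquet tau ->
  is_base tau B -> closed_under_finite_inter B ->
  B0 `<=` B ->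
  exists B1 : set (set X),
    [/\ B0 `<=` B1, B1 `<=` B,
        (B1 #<= ((@inl (set X) nat) @` B0 `|` (@inr (set X) nat) @` setT))%card
      & choquet (generated_topology B1)].
Proof.
move=> [tauT _ _] [sigma sigma_win] Bbase BI B0B.
have [[legal _] [Btau _]] := (sigma_win, Bbase).
pose good s := exists V, [/\ B V, V !=set0 & V `<=` sigma s].
have /choice[ans ansP] : forall s, exists V, good s -> [/\ B V, V !=set0 & V `<=` sigma s].
  by move=> s; have [[V ?]|] := pselect (good s); [exists V|exists setT].
pose B1 := hull B0 good ans.
have B1B : B1 `<=` B by apply: hull_sub => // _ [s /ansP[BV _ _] <-].
have Mtau : B1 `|` [set setT] `<=` tau by move=> W [/B1B/Btau|->].
exists B1; split=> //.
- exact: sub_hull.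
- have inrK : range inr `<=` inl @` B0 `|` @inr (set X) nat @` setT.
    by move=> _ [n _ <-]; right; exists n.
  apply/injects_card_le/(injects_hull good ans inrK); first by move=> m n [].
  by exists inl => [W B0W|W V _ _ []]; first by left; exists W.
apply: (choquet_transfer sigma_win Mtau); first by exists setT; right.
- move=> U tU [x Ux].
  have [W [MW Wx WU]] := generated_topology_nbhs (@hull_setI _ B0 good ans) tU Ux.
  by exists W; split=> //; exists x.
- move=> h W hM MW nW; have gs := legal_answer_base h legal Bbase (Mtau _ MW) nW.
  have [_ nV Vs] := ansP _ gs; exists (ans (rcons h W)); split=> //.
  apply: sub_generated_topology; apply: hull_answer gs => w /=.
  by rewrite mem_rcons in_cons => /orP[/eqP->|/hM].
Qed.
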